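(* Let $\mathfrak{n}$ be a complex simple Lie algebra of type $B_n$ ($n\ge2$) and let $\mathfrak{n}=\mathfrak{n}_{-3}\oplus\cdots\oplus\mathfrak{n}_3$ be the $|3|$-grading associated to $\Sigma_i=\{\alpha_1,\alpha_i\}$, where $2\le i\le n$. Then there is no graded isomorphism between $\mathfrak{F}_{r,3}$ and $\mathfrak{n}_{-3}\oplus\mathfrak{n}_{-2}\oplus\mathfrak{n}_{-1}$ (for any positive integer $r$).
   Context: Simple roots of $B_n$ are labeled in the standard way, with highest root $\alpha_1+2\alpha_2+\cdots+2\alpha_n$. For a root $\alpha=\sum a_l\alpha_l$ and a set $\Sigma$ of simple roots, $ht_\Sigma(\alpha)=\sum_{\alpha_l\in\Sigma}a_l$; the grading associated to $\Sigma$ is $\mathfrak{n}_m=\bigoplus_{ht_\Sigma(\alpha)=m}\mathfrak{g}_\alpha$ ($m\ne0$), $\mathfrak{n}_0=\mathfrak{h}\oplus\bigoplus_{ht_\Sigma(\alpha)=0}\mathfrak{g}_\alpha$, a $|3|$-grading since the highest root has $\Sigma_i$-height $3$. $\mathfrak{F}_{r,3}$ is the free nilpotent Lie algebra of step $3$ on $r$ generators with canonical grading $\mathfrak{f}_{-1}$ (span of generators), $\mathfrak{f}_{-2}=[\mathfrak{f}_{-1},\mathfrak{f}_{-1}]$, $\mathfrak{f}_{-3}=[\mathfrak{f}_{-1},\mathfrak{f}_{-2}]$; a graded isomorphism is a Lie algebra isomorphism mapping $\mathfrak{f}_{-m}$ onto $\mathfrak{n}_{-m}$ for $m=1,2,3$.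 *)

From HB Require Import structures.
From mathcomp Require Import all_boot all_order all_algebra.
From mathcomp Require Import reals complex.
Set Implicit Arguments. Unset Strict Implicit. Unset Printing Implicit Defensive.
Import Order.TTheory GRing.Theory Num.Theory.
Local Open Scope ring_scope.

Record lieAlgebra (K : fieldType) := LieAlgebra {
  lie_sort :> lmodType K;
  lie_br : lie_sort -> lie_sort -> lie_sort;
  lie_brDl : forall (a : K) (x y z : lie_sort),
      lie_br (a *: x + y) z = a *: lie_br x z + lie_br y z;
  lie_brDr : forall (a : K) (x y z : lie_sort),
      lie_br z (a *: x + y) = a *: lie_br z x + lie_br z y;
  lie_alt : forall x : lie_sort, lie_br x x = 0;
  lie_jacobi : forall x y z : lie_sort,
      lie_br x (lie_br y z) + lie_br y (lie_br z x) + lie_br z (lie_br x y) = 0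
}.
Arguments lie_br {K} _ _ _.

Definition step_le3 (K : fieldType) (L : lieAlgebra K) : Prop :=
  forall x y z w : L, lie_br L x (lie_br L y (lie_br L z w)) = 0.

Definition lie_hom (K : fieldType) (L M : lieAlgebra K) (h : L -> M) : Prop :=
  (forall (a : K) (x y : L), h (a *: x + y) = a *: h x + h y) /\
  (forall x y : L, h (lie_br L x y) = lie_br M (h x) (h y)).

Definition free_nilpotent3 (K : fieldType) (r : nat) (F : lieAlgebra K)
    (gen : 'I_r -> F) : Prop :=
  step_le3 F /\
  forall (L : lieAlgebra K) (g : 'I_r -> L), step_le3 L ->
    (exists h : F -> L, lie_hom h /\ forall j, h (gen j) = g j) /\
    (forall h1 h2 : F -> L, lie_hom h1 -> lie_hom h2 ->
        (forall j, h1 (gen j) = g j) -> (forall j, h2 (gen j) = g j) ->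
        forall x, h1 x = h2 x).

(* canonical grading of F_{r,3} *)
Definition fgr1 (K : fieldType) (r : nat) (F : lieAlgebra K) (gen : 'I_r -> F)
    (x : F) : Prop :=
  exists c : 'I_r -> K, x = \sum_(j < r) c j *: gen j.
Definition fgr2 (K : fieldType) (r : nat) (F : lieAlgebra K) (gen : 'I_r -> F)
    (x : F) : Prop :=
  exists s : seq (F * F),
    (forall p, p \in s -> fgr1 gen p.1 /\ fgr1 gen p.2) /\
    x = \sum_(p <- s) lie_br F p.1 p.2.
Definition fgr3 (K : fieldType) (r : nat) (F : lieAlgebra K) (gen : 'I_r -> F)
    (x : F) : Prop :=
  exists s : seq (F * F),
    (forall p, p \in s -> fgr1 gen p.1 /\ fgr2 gen p.2) /\
    x = \sum_(p <- s) lie_br F p.1 p.2.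

(* so(2n+1) w.r.t. the symmetric form with antidiagonal Gram matrix J;
   indices 0..2n.  The Cartan subalgebra is the diagonal matrices
   diag(t_1,..,t_n,0,-t_n,..,-t_1). *)
Definition Jform (K : fieldType) (n : nat) : 'M[K]_(n.*2.+1) :=
  \matrix_(p, q) ((p + q == n.*2)%N)%:R.

Definition in_so (K : fieldType) (n : nat) (X : 'M[K]_(n.*2.+1)) : Prop :=
  X^T *m Jform K n + Jform K n *m X = 0.

(* weight of the basis vector at position p, in coordinates w.r.t. e_1..e_n
   (0-indexed k) : e_{p+1} for p < n, 0 for p = n, -e_{2n-p+1} for p > n. *)
Definition weight (n : nat) (p : 'I_(n.*2.+1)) : 'I_n -> int :=
  fun k => if (p < n)%N then ((p : nat) == k)%:Z
           else if (p : nat) == n then 0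
           else - (((n.*2 - p)%N == k)%:Z).

(* simple roots of B_n (0-indexed): alpha_l = e_l - e_{l+1} (l < n-1),
   alpha_{n-1} = e_{n-1}; highest root e_1 + e_2 = a1 + 2 a2 + ... + 2 an. *)
Definition simple_root (n : nat) (l : 'I_n) : 'I_n -> int :=
  fun k => ((k == l)%:Z - (((l.+1 < n)%N && ((k : nat) == l.+1))%:Z)).

(* coefficient of alpha_l when writing c = sum_k c_k e_k in the basis of
   simple roots (e_k = alpha_k + ... + alpha_n) *)
Definition alpha_coef (n : nat) (c : 'I_n -> int) (l : nat) : int :=
  \sum_(k < n | (k <= l)%N) c k.

(* Sigma_i-height, Sigma_i = {alpha_1, alpha_i} (1-indexed), i >= 2 *)
Definition ht_Sigma (n i : nat) (c : 'I_n -> int) : int :=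
  alpha_coef c 0 + alpha_coef c i.-1.

(* n_m for m <> 0 : sum of the root spaces g_alpha with ht_Sigma alpha = m;
   the root space of alpha in so(2n+1) consists of the elements supported on
   the entries (p,q) with weight p - weight q = alpha. *)
Definition ngr (K : fieldType) (n i : nat) (m : int) (X : 'M[K]_(n.*2.+1))
    : Prop :=
  in_so X /\
  forall p q, X p q != 0 -> ht_Sigma i (fun k => weight p k - weight q k) = m.

Definition nminus (K : fieldType) (n i : nat) (X : 'M[K]_(n.*2.+1)) : Prop :=
  exists X1 X2 X3, [/\ ngr i (-1) X1, ngr i (-2) X2, ngr i (-3) X3 &
                       X = X1 + X2 + X3].

Definition graded_iso (K : fieldType) (n i r : nat) (F : lieAlgebra K)
    (gen : 'I_r -> F) (phi : F -> 'M[K]_(n.*2.+1)) : Prop :=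
  [/\ (forall (a : K) (x y : F), phi (a *: x + y) = a *: phi x + phi y),
      (forall x y : F, phi (lie_br F x y) = phi x *m phi y - phi y *m phi x),
      injective phi,
      (forall x, nminus i (phi x)) /\ (forall X, nminus i X -> exists x, phi x = X) &
      [/\ (forall x, fgr1 gen x -> ngr i (-1) (phi x)) /\
          (forall X, ngr i (-1) X -> exists x, fgr1 gen x /\ phi x = X),
          (forall x, fgr2 gen x -> ngr i (-2) (phi x)) /\
          (forall X, ngr i (-2) X -> exists x, fgr2 gen x /\ phi x = X) &
          (forall x, fgr3 gen x -> ngr i (-3) (phi x)) /\
          (forall X, ngr i (-3) X -> exists x, fgr3 gen x /\ phi x = X)]].
Arguments graded_iso {K} n i {r F} gen phi.

(* Degree-one elements x = sum c_j g_j and y = sum d_j g_j of F_{r,3} with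
   [x,[x,y]] = 0 commute: the morphism sending g_j, g_k to the generators e0, e1 of
   the four-dimensional filiform algebra ([e0,e1] = e2, [e0,e2] = e3) maps
   [x,[x,y]] to c_j (c_j d_k - c_k d_j) e3, so all 2x2 minors of (c, d) vanish and
   y is a multiple of x, or x = 0.  In so(2n+1), the root vectors of -alpha_1 and of
   -e_2 = -(alpha_2 + ... + alpha_n) both have Sigma_i-height -1; their bracket is
   a nonzero root vector of -e_1, and bracketing it once more with the first one
   gives 0 since -alpha_1 - e_1 is not a root.  A graded isomorphism would pull this
   pair back to a pair of degree-one elements contradicting the first fact. *)

From HB Require Import structures.
From mathcomp Require Import all_boot all_order all_algebra.
From mathcomp Require Import reals complex ring zify.
Import Order.TTheory GRing.Theory Num.Theory.
Local Open Scope ring_scope.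
Local Open Scope complex_scope.

Set Implicit Arguments. Unset Strict Implicit. Unset Printing Implicit Defensive.

Local Notation mx_br A B := (A *m B - B *m A).

Definition pack_linear (K : fieldType) (U V : lmodType K) (f : U -> V)
  (f_lin : linear f) : {linear U -> V} :=
  HB.pack f (GRing.isLinear.Build _ _ _ _ f f_lin).

Section LieAlgebraTheory.
Variables (K : fieldType) (L : lieAlgebra K).

Lemma lie_br0l (y : L) : lie_br L 0 y = 0.
Proof. exact: (linear0 (pack_linear (fun a x z => lie_brDl a x z y))). Qed.

Lemma lie_brZr a (x y : L) : lie_br L x (a *: y) = a *: lie_br L x y.
Proof. exact: (linearZ_LR (pack_linear (fun a y z => lie_brDr a y z x))). Qed.

End LieAlgebraTheory.

Section Filiform.
Variable K : fieldType.
Implicit Types u v w z : 'rV[K]_4.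

Definition fcoord u (m : nat) : K := u 0 (inord m).

Definition fvec (a b c d : K) : 'rV[K]_4 := \row_(t < 4) [:: a; b; c; d]`_t.

Definition fil_br u v : 'rV[K]_4 :=
  fvec 0 0 (fcoord u 0 * fcoord v 1 - fcoord u 1 * fcoord v 0)
           (fcoord u 0 * fcoord v 2 - fcoord u 2 * fcoord v 0).

Lemma fcoord_vec a b c d m : (m < 4)%N ->
  fcoord (fvec a b c d) m = [:: a; b; c; d]`_m.
Proof. by move=> lt_m4; rewrite /fcoord mxE inordK. Qed.

Lemma fcoord_sum r (c : 'I_r -> K) (v : 'I_r -> 'rV[K]_4) m :
  fcoord (\sum_(j < r) c j *: v j) m = \sum_(j < r) c j * fcoord (v j) m.
Proof. by rewrite /fcoord summxE; apply: eq_bigr => j _; rewrite mxE. Qed.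

Ltac fil_ext := apply/rowP => -[[|[|[|[|//]]]] lt_t4];
  rewrite /fil_br /fvec /fcoord ?(mxE, inordK) //=; ring.

Lemma fil_brDl a u v w : fil_br (a *: u + v) w = a *: fil_br u w + fil_br v w.
Proof. fil_ext. Qed.
Lemma fil_brDr a u v w : fil_br w (a *: u + v) = a *: fil_br w u + fil_br w v.
Proof. fil_ext. Qed.
Lemma fil_br_alt u : fil_br u u = 0.
Proof. fil_ext. Qed.
Lemma fil_br_jacobi u v w :
  fil_br u (fil_br v w) + fil_br v (fil_br w u) + fil_br w (fil_br u v) = 0.
Proof. fil_ext. Qed.

Definition filiform : lieAlgebra K :=
  LieAlgebra fil_brDl fil_brDr fil_br_alt fil_br_jacobi.

Lemma filiform_step_le3 : step_le3 filiform.
Proof. move=> u v w z /=; fil_ext. Qed.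

Lemma fcoord3_brr u v : fcoord (fil_br u (fil_br u v)) 3 =
  fcoord u 0 * (fcoord u 0 * fcoord v 1 - fcoord u 1 * fcoord v 0).
Proof. by rewrite /fil_br !fcoord_vec //=; ring. Qed.
End Filiform.

Lemma sum_mul_eqb (K : fieldType) r (e : 'I_r -> K) j :
  \sum_(m < r) e m * (m == j)%:R = e j.
Proof.
by under eq_bigr do rewrite mulr_natr mulrb; rewrite -big_mkcond big_pred1_eq.
Qed.

Lemma free_nilpotent3_minor (K : fieldType) r (F : lieAlgebra K)
    (gen : 'I_r -> F) (c d : 'I_r -> K) j k :
  free_nilpotent3 gen ->
  lie_br F (\sum_(m < r) c m *: gen m)
    (lie_br F (\sum_(m < r) c m *: gen m) (\sum_(m < r) d m *: gen m)) = 0 ->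
  c j * (c j * d k - c k * d j) = 0.
Proof.
move=> [_ univ] brr0.
pose g m : filiform K := fvec (m == j)%:R (m == k)%:R 0 0.
have [[h [[h_lin h_br] h_gen]] _] := univ _ g (@filiform_step_le3 K).
pose hL := pack_linear h_lin.
have hL_br x y : hL (lie_br F x y) = lie_br (filiform K) (hL x) (hL y) := h_br x y.
have hL_comb e : hL (\sum_(m < r) e m *: gen m) = \sum_(m < r) e m *: g m.
  by rewrite linear_sum; apply: eq_bigr => m _; rewrite linearZ_LR [hL _]h_gen.
have coord0 e : fcoord (\sum_(m < r) e m *: g m) 0 = e j.
  by rewrite fcoord_sum -[RHS](sum_mul_eqb e); apply: eq_bigr => m _; rewrite fcoord_vec.
have coord1 e : fcoord (\sum_(m < r) e m *: g m) 1 = e k.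
  by rewrite fcoord_sum -[RHS](sum_mul_eqb e); apply: eq_bigr => m _; rewrite fcoord_vec.
move/(congr1 hL): brr0; rewrite linear0 !hL_br !hL_comb => /(congr1 (fun u => fcoord u 3)) /=.
by rewrite fcoord3_brr !coord0 !coord1 /fcoord mxE.
Qed.

Lemma free_nilpotent3_brr_eq0 (K : fieldType) r (F : lieAlgebra K)
    (gen : 'I_r -> F) (x y : F) :
  free_nilpotent3 gen -> fgr1 gen x -> fgr1 gen y ->
  lie_br F x (lie_br F x y) = 0 -> lie_br F x y = 0.
Proof.
move=> free [c ->] [d ->] brr0.
have minor0 j k : c j * d k = c k * d j.
  apply/eqP; rewrite -subr_eq0; set m := _ - _.
  have : m ^+ 2 = d k * (c j * m) + d j * (c k * (c k * d j - c j * d k)).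
    by rewrite /m; ring.
  rewrite (free_nilpotent3_minor j k free brr0) (free_nilpotent3_minor k j free brr0).
  by rewrite !mulr0 addr0 => /eqP; rewrite expf_eq0.
have [j cj_neq0 | c_eq0] := pickP (fun j => c j != 0).
  have -> : \sum_(m < r) d m *: gen m = (d j / c j) *: \sum_(m < r) c m *: gen m.
    rewrite scaler_sumr; apply: eq_bigr => m _; rewrite scalerA; congr (_ *: _).
    by rewrite mulrAC [d j * _]mulrC minor0 [c j * _]mulrC mulfK.
  by rewrite lie_brZr lie_alt scaler0.
rewrite big1 ?lie_br0l // => m _.
by move/negbFE/eqP: (c_eq0 m) => ->; rewrite scale0r.
Qed.

Section OrthogonalB.
Variables (K : fieldType) (n : nat).
Local Notation N := n.*2.
Implicit Types p q s t : 'I_N.+1.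

Lemma rev_ord_eq p q : (rev_ord p == q) = (p == rev_ord q).
Proof. by apply/eqP/eqP => [<- | ->]; rewrite rev_ordK. Qed.

Lemma JformE p q : Jform K n p q = (q == rev_ord p)%:R.
Proof.
rewrite mxE; congr ((nat_of_bool _)%:R); apply/eqP/eqP.
  by move=> pq_N; apply: val_inj; rewrite /= subSS; lia.
by move=> ->; rewrite /= subSS; have := ltn_ord p; lia.
Qed.

Lemma Jform_mulmx (A : 'M[K]_N.+1) p q : (Jform K n *m A) p q = A (rev_ord p) q.
Proof.
rewrite mxE; under eq_bigr do rewrite JformE mulr_natl mulrb.
by rewrite -big_mkcond big_pred1_eq.
Qed.

Lemma mulmx_Jform (A : 'M[K]_N.+1) p q : (A *m Jform K n) p q = A p (rev_ord q).
Proof.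
rewrite mxE; under eq_bigr do rewrite JformE eq_sym rev_ord_eq mulr_natr mulrb.
by rewrite -big_mkcond big_pred1_eq.
Qed.

Definition rootmx p q : 'M[K]_N.+1 :=
  delta_mx p q - delta_mx (rev_ord q) (rev_ord p).

Lemma rootmx_in_so p q : in_so (rootmx p q).
Proof.
apply/matrixP => s t; rewrite [LHS]mxE mulmx_Jform Jform_mulmx !mxE.
rewrite !(inj_eq rev_ord_inj) !rev_ord_eq.
by rewrite [(s == q) && _]andbC [(s == rev_ord p) && _]andbC; ring.
Qed.

Lemma weight_rev p k : weight (rev_ord p) k = - weight p k.
Proof.
rewrite /weight /= subSS; have := ltn_ord p.
case: (ltngtP p n) => [p_lt_n | p_gt_n | p_eq_n] p_le_N.
- have -> : (N - p < n)%N = false by lia.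
  have -> : ((N - p)%N == n) = false by lia.
  by rewrite subKn ?opprK //; lia.
- have -> : (N - p < n)%N by lia.
  by rewrite opprK.
- by rewrite p_eq_n -addnn addnK ltnn eqxx oppr0.
Qed.

Lemma alpha_coef_weight p l : (p < n)%N -> alpha_coef (weight p) l = (p <= l)%:Z.
Proof.
move=> p_lt_n; rewrite /alpha_coef big_mkcond (bigD1 (Ordinal p_lt_n)) //=.
rewrite /weight p_lt_n eqxx big1 ?addr0; first by case: (p <= l)%N.
move=> k; rewrite -val_eqE /= => /negbTE k_neq_p.
by case: (k <= l)%N; rewrite // eq_sym k_neq_p.
Qed.

Variable i : nat.

Lemma ht_SigmaB (f g : 'I_n -> int) :
  ht_Sigma i (fun k => f k - g k) = ht_Sigma i f - ht_Sigma i g.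
Proof. by rewrite /ht_Sigma /alpha_coef !sumrB; ring. Qed.

Lemma ht_Sigma_weight_rev p :
  ht_Sigma i (weight (rev_ord p)) = - ht_Sigma i (weight p).
Proof.
rewrite /ht_Sigma /alpha_coef opprD -!sumrN.
by congr (_ + _); apply: eq_bigr => k _; rewrite weight_rev.
Qed.

Lemma rootmx_ngr p q :
  ngr i (ht_Sigma i (weight p) - ht_Sigma i (weight q)) (rootmx p q).
Proof.
split=> [|s t]; first exact: rootmx_in_so.
rewrite !mxE ht_SigmaB.
case: (boolP ((s == p) && (t == q))) => [/andP[/eqP-> /eqP->] // | _].
case: (boolP ((s == rev_ord q) && (t == rev_ord p))) => [/andP[/eqP-> /eqP->] _ | _].
  by rewrite !ht_Sigma_weight_rev opprK addrC.
by rewrite subrr eqxx.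
Qed.
End OrthogonalB.

Lemma rootmx_neq0 (K : fieldType) n (p q : 'I_n.*2.+1) :
  p != rev_ord q -> rootmx K p q != 0.
Proof.
move=> /negbTE p_neq; apply/negP => /eqP/matrixP/(_ p q).
by rewrite !mxE !eqxx p_neq /= subr0 => /eqP; rewrite oner_eq0.
Qed.

Section SigmaGrading.
Variables (K : fieldType) (n : nat).
Hypothesis n_ge2 : (2 <= n)%N.
Local Notation N := n.*2.

Definition idx m : 'I_N.+1 := inord m.

Lemma idxK m : (m <= N)%N -> idx m = m :> nat.
Proof. exact: inordK. Qed.

Lemma rev_idx m : (m <= N)%N -> rev_ord (idx m) = idx (N - m).
Proof. by move=> m_le_N; apply: val_inj; rewrite /= !idxK ?subSS //; lia. Qed.

Lemma idx_eqF a b : (a <= N)%N -> (b <= N)%N -> a <> b -> (idx a == idx b) = false.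
Proof. by move=> a_le b_le a_neq_b; rewrite -val_eqE /= !idxK //; apply/eqP. Qed.

(* Indices are 0-based: [idx 0], [idx 1] carry the weights e_1, e_2 and [idx n]
   the weight 0. *)
Definition Xneg_alpha1 : 'M[K]_N.+1 := rootmx K (idx 1) (idx 0).
Definition Xneg_e2 : 'M[K]_N.+1 := rootmx K (idx n) (idx 1).

Lemma mx_br_Xneg_alpha1_e2 : mx_br Xneg_alpha1 Xneg_e2 = - rootmx K (idx n) (idx 0).
Proof.
have N_n : (N - n = n)%N by lia.
rewrite /Xneg_alpha1 /Xneg_e2 /rootmx !rev_idx ?subn0 ?N_n; try lia.
rewrite !mulmxBl !mulmxBr !mul_delta_mx_cond !eqxx !idx_eqF; try lia.
by rewrite !mulr0n !mulr1n !subr0 !sub0r opprK opprB.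
Qed.

Lemma mx_br_Xneg_alpha1_br_eq0 : mx_br Xneg_alpha1 (mx_br Xneg_alpha1 Xneg_e2) = 0.
Proof.
have N_n : (N - n = n)%N by lia.
rewrite mx_br_Xneg_alpha1_e2 /Xneg_alpha1 /rootmx !rev_idx ?subn0 ?N_n; try lia.
rewrite mulmxN mulNmx !mulmxBl !mulmxBr !mul_delta_mx_cond !idx_eqF; try lia.
by rewrite !mulr0n !subrr.
Qed.

Lemma mx_br_Xneg_alpha1_e2_neq0 : mx_br Xneg_alpha1 Xneg_e2 != 0.
Proof.
rewrite mx_br_Xneg_alpha1_e2 oppr_eq0 rootmx_neq0 // rev_idx ?subn0 ?idx_eqF //; lia.
Qed.

Variable i : nat.
Hypothesis i_ge2 : (2 <= i)%N.

Lemma ht_Sigma_weight0 : ht_Sigma i (weight (idx 0)) = 2.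
Proof. by rewrite /ht_Sigma !alpha_coef_weight ?idxK //; lia. Qed.

Lemma ht_Sigma_weight1 : ht_Sigma i (weight (idx 1)) = 1.
Proof. by rewrite /ht_Sigma !alpha_coef_weight ?idxK //; lia. Qed.

Lemma ht_Sigma_weight_mid : ht_Sigma i (weight (idx n)) = 0.
Proof.
rewrite /ht_Sigma /alpha_coef !big1 // => k _; rewrite /weight idxK ?ltnn ?eqxx //; lia.
Qed.

Lemma Xneg_alpha1_ngr : ngr i (-1) Xneg_alpha1.
Proof. by have := rootmx_ngr K i (idx 1) (idx 0); rewrite ht_Sigma_weight1 ht_Sigma_weight0. Qed.

Lemma Xneg_e2_ngr : ngr i (-1) Xneg_e2.
Proof. by have := rootmx_ngr K i (idx n) (idx 1); rewrite ht_Sigma_weight_mid ht_Sigma_weight1. Qed.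
End SigmaGrading.

Lemma graded_iso_mx_br_eq0 (K : fieldType) n i r (F : lieAlgebra K)
    (gen : 'I_r -> F) (phi : F -> 'M[K]_(n.*2.+1)) (X Y : 'M[K]_(n.*2.+1)) :
  free_nilpotent3 gen -> graded_iso n i gen phi ->
  ngr i (-1) X -> ngr i (-1) Y -> mx_br X (mx_br X Y) = 0 -> mx_br X Y = 0.
Proof.
move=> free [phi_lin phi_br phi_inj _ [[_ onto1] _ _]] X1 Y1.
have [x [x1 <-]] := onto1 X X1; have [y [y1 <-]] := onto1 Y Y1 => brr0.
have phi0 : phi 0 = 0 := linear0 (pack_linear phi_lin).
rewrite -phi_br (free_nilpotent3_brr_eq0 free x1 y1) ?phi0 //.
by apply: phi_inj; rewrite phi0 !phi_br.
Qed.

Unset Implicit Arguments.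

Theorem theorem4p6 (R : realType) (n i r : nat) :
  (2 <= n)%N -> (2 <= i <= n)%N -> (0 < r)%N ->
  forall (F : lieAlgebra R[i]) (gen : 'I_r -> F),
    free_nilpotent3 gen ->
    ~ exists phi : F -> 'M[R[i]]_(n.*2.+1), graded_iso n i gen phi.
Proof.
move=> n_ge2 /andP[i_ge2 _] _ F gen free [phi iso].
have := graded_iso_mx_br_eq0 free iso
  (Xneg_alpha1_ngr _ n_ge2 i_ge2) (Xneg_e2_ngr _ n_ge2 i_ge2)
  (mx_br_Xneg_alpha1_br_eq0 _ n_ge2) => /eqP.
by rewrite (negbTE (mx_br_Xneg_alpha1_e2_neq0 _ n_ge2)).
Qed.
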